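(* Let $V_1,V_2$ be vertex operator algebras, $W$ a weak $V_1\otimes V_2$-module and $W_2$ a finitely generated weak $V_2$-module. Then $\mathrm{Hom}_{V_2}(W_2,W)$ is a weak $V_1$-module with $(Y(v_{(1)},x)f)(w_{(2)})=Y(v_{(1)}\otimes\mathbf 1,x)f(w_{(2)})$ for $v_{(1)}\in V_1$, $f\in\mathrm{Hom}_{V_2}(W_2,W)$, $w_{(2)}\in W_2$. Moreover, if $W_2$ is an (ordinary) $V_2$-module and $W$ is an (ordinary) $V_1\otimes V_2$-module on which $L^1(0)$ or $L^2(0)$ acts semisimply, then $\mathrm{Hom}_{V_2}(W_2,W)$ is an (ordinary) $V_1$-module.
   Context: Weak modules for a vertex operator algebra $U$ with vacuum $\mathbf 1$: vector space $M$ with $Y_M:U\to(\mathrm{End}\,M)[[x,x^{-1}]]$ such that $Y_M(u,x)m\in M((x))$, $Y_M(\mathbf 1,x)=\mathrm{id}$, and the Jacobi identity $x_0^{-1}\delta(\frac{x_1-x_2}{x_0})Y_M(u,x_1)Y_M(v,x_2)-x_0^{-1}\delta(\frac{x_2-x_1}{-x_0})Y_M(v,x_2)Y_M(u,x_1)=x_2^{-1}\delta(\frac{x_1-x_0}{x_2})Y_M(Y(u,x_0)v,x_2)$ holds, where $\delta(x)=\sum_{n\in\mathbb Z}x^n$ and binomials are expanded in nonnegative powers of the second variable. An (ordinary) module is a weak module on which $L(0)$ acts semisimply, $M=\coprod_{h\in\mathbb C}M_{(h)}$, with $\dim M_{(h)}<\infty$ and $M_{(h+n)}=0$ for all sufficiently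 negative integers $n$. $V_1\otimes V_2$ is the tensor product vertex operator algebra; $V_1$ and $V_2$ are identified with the subalgebras $V_1\otimes\mathbf 1$ and $\mathbf 1\otimes V_2$, so that a weak $V_1\otimes V_2$-module is a weak $V_1$-module and a weak $V_2$-module with commuting actions. $L^1(n)$ and $L^2(n)$ denote the Virasoro operators from the Virasoro elements of $V_1$ and $V_2$; $L^1(n)+L^2(n)$ are those of $V_1\otimes V_2$. A weak $V_2$-module is finitely generated if it is generated by a finite-dimensional subspace. *)

From HB Require Import structures.
From mathcomp Require Import all_boot all_order all_algebra.
From mathcomp Require Import functions.
Set Implicit Arguments. Unset Strict Implicit. Unset Printing Implicit Defensive.
Import Order.TTheory GRing.Theory Num.Theory.
Local Open Scope ring_scope.

(* A field-valued "vertex operator" on a space M is encoded by its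
   modes: [Y u n m] is u_n m, where Y(u,x) = \sum_{n \in Z} u_n x^{-n-1}. *)

Section Defs.
Variable K : numClosedFieldType.

Definition binz (l : int) (i : nat) : K :=
  (\prod_(j < i) (l%:~R - j%:R)) / (i`!)%:R.

Definition subspace (M : lmodType K) (S : M -> Prop) : Prop :=
  S 0 /\ forall (a : K) (x y : M), S x -> S y -> S (a *: x + y).

Definition fin_dim (M : lmodType K) (S : M -> Prop) : Prop :=
  exists s : seq M, forall m, S m ->
    exists c : 'I_(size s) -> K, m = \sum_(i < size s) c i *: s`_i.

Section WeakModule.
Variables (V : lmodType K) (vac : V) (YV : V -> int -> V -> V).

(* The Jacobi identity, written through its coefficients (Borcherds identity):
   coefficient of x0^{-l-1} x1^{-m-1} x2^{-n-1}:
   \sum_{i>=0} (-1)^i binom(l,i) (u_{m+l-i} v_{n+i} w - (-1)^l v_{n+l-i} u_{m+i} w)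
     = \sum_{i>=0} binom(m,i) (u_{l+i} v)_{m+n-i} w.
   All three sums have finitely many nonzero terms (by truncation), so they are
   equal iff all sufficiently long partial sums agree. *)
Definition jacobi_at (M : lmodType K) (Y : V -> int -> M -> M)
    (u v : V) (w : M) (l m n : int) : Prop :=
  exists N0 : nat, forall N : nat, (N0 <= N)%N ->
    \sum_(i < N) ((-1) ^+ i * binz l i) *:
        (Y u (m + l - i%:Z) (Y v (n + i%:Z) w)
         - (-1) ^+ `|l|%N *: Y v (n + l - i%:Z) (Y u (m + i%:Z) w))
    = \sum_(i < N) binz m i *: Y (YV u (l + i%:Z) v) (m + n - i%:Z) w.

Definition weak_module_on (M : lmodType K) (S : M -> Prop)
    (Y : V -> int -> M -> M) : Prop :=
  subspace S /\
  (forall u n w, S w -> S (Y u n w)) /\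
  (forall u n (a : K) w w', S w -> S w' ->
      Y u n (a *: w + w') = a *: Y u n w + Y u n w') /\
  (forall u u' n (a : K) w, S w ->
      Y (a *: u + u') n w = a *: Y u n w + Y u' n w) /\
  (forall u w, S w -> exists N : int, forall n, N <= n -> Y u n w = 0) /\
  (forall n w, S w -> Y vac n w = if n == -1 then w else 0) /\
  (forall u v w l m n, S w -> jacobi_at Y u v w l m n).

Definition weak_module (M : lmodType K) (Y : V -> int -> M -> M) : Prop :=
  weak_module_on (fun _ => True) Y.

Definition fin_generated (M : lmodType K) (Y : V -> int -> M -> M) : Prop :=
  exists s : seq M, forall S : M -> Prop,
    subspace S ->
    (forall u n w, S w -> S (Y u n w)) ->
    (forall w, w \in s -> S w) -> forall w, S w.
End WeakModule.

Definition semisimple_on (M : lmodType K) (S : M -> Prop) (T : M -> M) : Prop :=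
  forall m, S m -> exists s : seq (K * M),
    (forall p, p \in s -> S p.2 /\ T p.2 = p.1 *: p.2) /\
    m = \sum_(p <- s) p.2.

Definition graded_on (M : lmodType K) (S : M -> Prop) (L0 : M -> M) : Prop :=
  [/\ semisimple_on S L0,
      (forall h : K, fin_dim (fun m => S m /\ L0 m = h *: m))
    & (forall h : K, exists N : int, forall n : int, n <= N ->
          forall m, S m -> L0 m = (h + n%:~R) *: m -> m = 0)].

Section VOA.
Variables (V : lmodType K) (vac om : V) (YV : V -> int -> V -> V) (c : K).

Definition vir (n : int) : V -> V := YV om (n + 1).

Definition is_VOA : Prop :=
  weak_module vac YV YV /\
  ((forall v n, 0 <= n -> YV v n vac = 0) /\ (forall v, YV v (-1) vac = v)) /\
  (forall (m n : int) v,
      vir m (vir n v) - vir n (vir m v)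
      = (m - n)%:~R *: vir (m + n) v
        + ((if m + n == 0 then (m ^+ 3 - m)%:~R / 12%:R else 0) * c) *: v) /\
  (forall v n w, YV (vir (-1) v) n w = (- n%:~R) *: YV v (n - 1) w) /\
  vir 0 om = 2%:R *: om /\
    [/\ (forall v, exists s : seq (int * V),
              (forall p, p \in s -> vir 0 p.2 = p.1%:~R *: p.2) /\
              v = \sum_(p <- s) p.2),
          (forall n : int, fin_dim (fun v => vir 0 v = n%:~R *: v))
        & (exists N : int, forall n : int, n <= N ->
              forall v, vir 0 v = n%:~R *: v -> v = 0)].

Definition module_on (M : lmodType K) (S : M -> Prop)
    (Y : V -> int -> M -> M) : Prop :=
  weak_module_on vac YV S Y /\ graded_on S (Y om 1).
End VOA.

(* weak V1 (x) V2-module: a weak V1-module and a weak V2-module with commuting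
   actions (V_i identified with the subalgebras V1 (x) 1 and 1 (x) V2) *)
Definition weak_tensor_module (V1 V2 : lmodType K) (vac1 : V1) (vac2 : V2)
    (Y1 : V1 -> int -> V1 -> V1) (Y2 : V2 -> int -> V2 -> V2)
    (W : lmodType K) (YW1 : V1 -> int -> W -> W) (YW2 : V2 -> int -> W -> W) :=
  [/\ weak_module vac1 Y1 YW1, weak_module vac2 Y2 YW2
    & forall a b m n w, YW1 a m (YW2 b n w) = YW2 b n (YW1 a m w)].

Definition HomV (V : lmodType K) (W2 W : lmodType K)
    (Y2 : V -> int -> W2 -> W2) (Y : V -> int -> W -> W) (f : W2 -> W) : Prop :=
  (forall (a : K) x y, f (a *: x + y) = a *: f x + f y) /\
  (forall v n w, f (Y2 v n w) = Y v n (f w)).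

Definition Yhom (V W2 W : lmodType K) (Y : V -> int -> W -> W)
    (v : V) (n : int) (f : W2 -> W) : W2 -> W := fun w => Y v n (f w).
End Defs.

From HB Require Import structures.
From mathcomp Require Import all_boot all_order all_algebra.
From mathcomp Require Import boolp functions zify.
Set Implicit Arguments. Unset Strict Implicit. Unset Printing Implicit Defensive.
Import Order.TTheory GRing.Theory Num.Theory.
Local Open Scope ring_scope.

(* Hom_{V2}(W2, W) is a subspace of the space of all maps W2 -> W, on which
   the modes of V1 act pointwise since they commute with those of V2.  Given
   finitely many generators of W2, the set of w with u_n f(w) = 0 for all
   n >= N is a V2-submodule, so a bound N valid on the generators is valid
   everywhere: truncation holds uniformly in w, and so do the Borcherds
   identities.  For the grading, choose generators q that are L2(0)-
   eigenvectors of weight mu_q.  Then f(q) is an L2(0)-eigenvector of W, hence,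
   L(0) = L1(0) + L2(0) being semisimple, a sum of L1(0)-eigenvectors;
   Lagrange interpolation projectors in L1(0) then split f into L1(0)-
   eigenmaps.  Evaluation at the generators embeds the h-weight space of the
   Hom space into the sum of the weight spaces W_(h + mu_q), whence finite
   dimensionality and the lower bound on weights. *)

Section LinearPredicate.
Variables (R : pzRingType) (U V : lmodType R) (f : U -> V).
Hypothesis f_lin : linear f.
Let F : {linear U -> V} := HB.pack f (GRing.isLinear.Build R U V *:%R f f_lin).

Lemma lin0 : f 0 = 0. Proof. exact: raddf0 F. Qed.
Lemma linD x y : f (x + y) = f x + f y. Proof. exact: (raddfD F x y). Qed.
Lemma linB x y : f (x - y) = f x - f y. Proof. exact: (raddfB F x y). Qed.
Lemma linZ a x : f (a *: x) = a *: f x. Proof. exact: (linearZZ F a x). Qed.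
Lemma lin_sum (I : Type) (r : seq I) (P : pred I) (G : I -> U) :
  f (\sum_(i <- r | P i) G i) = \sum_(i <- r | P i) f (G i).
Proof. exact: (raddf_sum F r P G). Qed.
End LinearPredicate.

Section Span.
Variables (R : pzRingType) (M : lmodType R).

Definition span (t : seq M) (y : M) :=
  exists c : 'I_(size t) -> R, y = \sum_(i < size t) c i *: t`_i.

Lemma span0 t : span t 0.
Proof. by exists (fun _ => 0); rewrite big1 // => i _; rewrite scale0r. Qed.

Lemma spanZD t a x y : span t x -> span t y -> span t (a *: x + y).
Proof.
case=> c -> [d ->]; exists (fun i => a * c i + d i).
rewrite scaler_sumr -big_split /=; apply: eq_bigr => i _.
by rewrite scalerDl scalerA.
Qed.

Lemma span_nil y : span [::] y -> y = 0.
Proof. by case=> c ->; rewrite big_ord0. Qed.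

Lemma span_consP t0 t y :
  span (t0 :: t) y <-> exists d r, span t r /\ y = d *: t0 + r.
Proof.
split=> [[c ->]|[d [r [[c ->] ->]]]].
  rewrite big_ord_recl /=; exists (c ord0), (\sum_(i < size t) c (lift ord0 i) *: t`_i).
  by split => //; exists (fun i => c (lift ord0 i)).
exists (fun i : 'I_(size t).+1 => if unlift ord0 i is Some j then c j else d).
rewrite big_ord_recl /= unlift_none; congr (_ + _).
by apply: eq_bigr => i _; rewrite liftK.
Qed.
End Span.

Section Subspaces.
Variables (K : numClosedFieldType) (M N : lmodType K).

Lemma subspace_sum (S : M -> Prop) (I : eqType) (r : seq I) (G : I -> M) :
  subspace S -> (forall i, i \in r -> S (G i)) -> S (\sum_(i <- r) G i).
Proof.
move=> [S0 SZD]; elim: r => [|i r IH] Sr; first by rewrite big_nil.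
rewrite big_cons -[G i]scale1r; apply: SZD; first by apply: Sr; rewrite mem_head.
by apply: IH => j rj; apply: Sr; rewrite inE rj orbT.
Qed.

Lemma subspace_kernel (S : M -> Prop) (phi : M -> N) :
  subspace S -> linear phi -> subspace (fun x => S x /\ phi x = 0).
Proof.
move=> [S0 SZD] phi_lin; split; first by rewrite lin0.
move=> a x y [Sx phix] [Sy phiy]; split; first exact: SZD.
by rewrite phi_lin phix phiy scaler0 addr0.
Qed.

Lemma fin_dim_kernel_span (t : seq N) (S : M -> Prop) (phi : M -> N) :
  subspace S -> linear phi -> (forall x, S x -> span t (phi x)) ->
  fin_dim (fun x => S x /\ phi x = 0) -> fin_dim S.
Proof.
move=> + phi_lin; elim: t S => [|t0 t IHt] S S_sub St Sker.
  by case: Sker => u Su; exists u => x Sx; apply: Su; split; last exact/span_nil/St.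
pose S2 x := S x /\ span t (phi x).
have S2_sub : subspace S2.
  split; first by split; [exact: S_sub.1 | rewrite lin0 //; exact: span0].
  move=> a x y [Sx sx] [Sy sy]; split; first exact: S_sub.2.
  by rewrite phi_lin; apply: spanZD.
have [u S2u] : fin_dim S2.
  apply: IHt => //; first by move=> x [].
  by case: Sker => u Su; exists u => x [[Sx _] kx]; apply: Su.
have [[x0 [Sx0 tx0]]|S_in_S2] := pselect (exists x0, S x0 /\ ~ span t (phi x0));
  last first.
  exists u => x Sx; apply: S2u; split => //.
  by apply: contrapT => tx; apply: S_in_S2; exists x.
have [c [r0 [tr0 e0]]] := (span_consP _ _ _).1 (St x0 Sx0).
have c0 : c != 0 by apply/eqP => c0; apply: tx0; rewrite e0 c0 scale0r add0r.
exists (x0 :: u) => x Sx; apply/span_consP.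
have [d [r [tr e]]] := (span_consP _ _ _).1 (St x Sx).
exists (d / c), (x - (d / c) *: x0); split; last by rewrite addrC subrK.
apply: S2u; split; first by rewrite addrC -scaleNr; apply: S_sub.2.
(* the [t0]-coordinate of [phi x - d/c phi x0] cancels *)
rewrite linB // linZ // e e0 scalerDr scalerA divfK // opprD addrACA subrr add0r.
by rewrite addrC -scaleNr; apply: spanZD.
Qed.

Lemma fin_dim_joint_injective (X : eqType) (phi : X -> M -> N) (I : seq X)
    (S : M -> Prop) :
  subspace S -> (forall i, i \in I -> linear (phi i)) ->
  (forall i, i \in I -> exists t, forall x, S x -> span t (phi i x)) ->
  (forall x, S x -> (forall i, i \in I -> phi i x = 0) -> x = 0) -> fin_dim S.
Proof.
elim: I S => [|i I IH] S S_sub phi_lin phiS phi_inj.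
  by exists [::] => x Sx; rewrite (phi_inj x Sx) //; apply: span0.
have [t St] := phiS i (mem_head _ _).
apply: (fin_dim_kernel_span S_sub (phi_lin i (mem_head _ _)) St).
apply: IH => [||j jI|x [Sx phix0] phiI0].
- exact: subspace_kernel (phi_lin i (mem_head _ _)).
- by move=> j jI; apply: phi_lin; rewrite inE jI orbT.
- have [t' St'] : exists t', forall x, S x -> span t' (phi j x).
    by apply: phiS; rewrite inE jI orbT.
  by exists t' => x [/St'].
by apply: phi_inj => // j; rewrite inE => /predU1P [->|/phiI0].
Qed.
End Subspaces.

Section EigenSums.
Variables (R : fieldType) (M : lmodType R) (T : M -> M).
Hypothesis T_lin : linear T.

(* On the whole space, [semisimple_on (fun _ => True) T] unfolds to
   [forall m, True -> eigen_sum T (fun _ => True) m]. *)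
Definition eigen_sum (P : R -> Prop) (x : M) :=
  exists s : seq (R * M), (forall p, p \in s -> P p.1 /\ T p.2 = p.1 *: p.2)
    /\ x = \sum_(p <- s) p.2.

Lemma eigen_sum0 P : eigen_sum P 0.
Proof. by exists [::]; rewrite big_nil. Qed.

Lemma eigen_sumD P x y : eigen_sum P x -> eigen_sum P y -> eigen_sum P (x + y).
Proof.
move=> [s1 [s1P ->]] [s2 [s2P ->]]; exists (s1 ++ s2); rewrite big_cat.
by split=> // p; rewrite mem_cat => /orP [/s1P|/s2P].
Qed.

Lemma eigen_sum_sum P (I : eqType) (r : seq I) (G : I -> M) :
  (forall i, i \in r -> eigen_sum P (G i)) -> eigen_sum P (\sum_(i <- r) G i).
Proof.
elim: r => [|i r IH] rP; first by rewrite big_nil; apply: eigen_sum0.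
rewrite big_cons; apply: eigen_sumD; first by apply: rP; rewrite mem_head.
by apply: IH => j rj; apply: rP; rewrite inE rj orbT.
Qed.

Lemma eigen_sum_eigvec (P : R -> Prop) mu y :
  P mu -> T y = mu *: y -> eigen_sum P y.
Proof.
move=> Pmu Ty; exists [:: (mu, y)]; rewrite big_seq1.
by split=> // p; rewrite inE => /eqP ->.
Qed.

Lemma eigen_sumW (P P' : R -> Prop) x :
  (forall mu, P mu -> P' mu) -> eigen_sum P x -> eigen_sum P' x.
Proof.
move=> PP' [s [sP ->]]; exists s; split=> // p /sP [Pp Tp].
by split; first exact: PP'.
Qed.

Lemma eigen_sum_map (A : M -> M) P x : linear A -> (forall y, A (T y) = T (A y)) ->
  eigen_sum P x -> eigen_sum P (A x).
Proof.
move=> A_lin AT [s [sP ->]]; exists [seq (p.1, A p.2) | p <- s].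
rewrite big_map lin_sum //; split=> // _ /mapP [p /sP [Pp Tp] ->] /=.
by rewrite -AT Tp linZ.
Qed.

Lemma eigen_sumZ P a x : eigen_sum P x -> eigen_sum P (a *: x).
Proof.
apply: eigen_sum_map => [b y z|y]; first by rewrite scalerDr !scalerA mulrC.
by rewrite linZ.
Qed.

Lemma eigen_sum_seq (I : eqType) (r : seq I) (G : I -> M) :
  (forall i, i \in r -> eigen_sum (fun _ => True) (G i)) ->
  exists L : seq R, forall i, i \in r -> eigen_sum (fun mu => mu \in L) (G i).
Proof.
elim: r => [|i r IH] rG; first by exists [::].
have [L GL] : exists L : seq R, forall j, j \in r -> eigen_sum (fun mu => mu \in L) (G j).
  by apply: IH => j rj; apply: rG; rewrite inE rj orbT.
have [s [sT Gi]] := rG i (mem_head _ _).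
exists ([seq p.1 | p <- s] ++ L) => j; rewrite inE => /predU1P [->|rj].
  exists s; split=> // p ps; have [_ Tp] := sT p ps.
  by rewrite /= mem_cat map_f.
by apply: eigen_sumW (GL j rj) => mu /= Lmu; rewrite mem_cat Lmu orbT.
Qed.

(* [eig_annihilator s] is the operator \prod_(mu <- s) (T - mu), and
   [eig_proj L l] the Lagrange interpolation projector onto the [l]-eigenspace
   of a vector whose eigenvalues lie in [L]. *)
Definition eig_annihilator (s : seq R) (x : M) :=
  foldr (fun mu y => T y - mu *: y) x s.

Definition eig_proj (L : seq R) (l : R) (x : M) :=
  (\prod_(mu <- rem l L) (l - mu))^-1 *: eig_annihilator (rem l L) x.

Lemma eig_annihilator_linear s : linear (eig_annihilator s).
Proof.
move=> a x y; elim: s => [//|mu s IH] /=.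
by rewrite IH T_lin scalerDr !scalerA mulrC -scalerA opprD addrACA -scalerBr.
Qed.

Lemma eig_annihilator_eigvec s l y : T y = l *: y ->
  eig_annihilator s y = (\prod_(mu <- s) (l - mu)) *: y.
Proof.
move=> Ty; elim: s => [|mu s IH] /=; first by rewrite big_nil scale1r.
rewrite IH linZ // Ty big_cons !scalerA -scalerBl mulrBl.
by rewrite [_ * l]mulrC.
Qed.

Lemma eig_annihilator_comm (A : M -> M) s x :
  linear A -> (forall y, A (T y) = T (A y)) ->
  A (eig_annihilator s x) = eig_annihilator s (A x).
Proof.
by move=> A_lin AT; elim: s => [//|mu s IH] /=; rewrite linB // linZ // AT IH.
Qed.

Lemma eig_proj_linear L l : linear (eig_proj L l).
Proof.
by move=> a x y; rewrite /eig_proj eig_annihilator_linear scalerDr !scalerA mulrC.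
Qed.

Lemma eig_proj_comm (A : M -> M) L l x :
  linear A -> (forall y, A (T y) = T (A y)) ->
  A (eig_proj L l x) = eig_proj L l (A x).
Proof. by move=> A_lin AT; rewrite /eig_proj linZ // eig_annihilator_comm. Qed.

Lemma eig_proj_eigvec L l mu y : uniq L -> mu \in L -> T y = mu *: y ->
  eig_proj L l y = if mu == l then y else 0.
Proof.
move=> uL Lmu Ty; rewrite /eig_proj (eig_annihilator_eigvec _ Ty).
have [<-|mu_l] := eqVneq.
  rewrite scalerA mulVf ?scale1r // prodf_seq_neq0.
  apply/allP => nu Lnu /=; rewrite subr_eq0; apply: contraTneq Lnu => <-.
  by rewrite mem_rem_uniqF.
by rewrite [X in X *: y](big_rem mu (rem_mem mu_l Lmu)) /= subrr mul0r scale0r scaler0.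
Qed.

Lemma eigen_sum_proj L x : uniq L -> eigen_sum (fun mu => mu \in L) x ->
  x = \sum_(l <- L) eig_proj L l x /\
  forall l, l \in L -> T (eig_proj L l x) = l *: eig_proj L l x.
Proof.
move=> uL [s [sL ->]]; split.
  have P_lin l := eig_proj_linear L l.
  under [RHS]eq_bigr => l _ do rewrite (lin_sum (P_lin l)).
  rewrite exchange_big /=; apply: eq_big_seq => p ps; have [Lp Tp] := sL p ps.
  under eq_bigr do rewrite (eig_proj_eigvec _ uL Lp Tp).
  rewrite -big_mkcond /= (big_rem p.1) //= eqxx big_seq_cond big1 ?addr0 //.
  by move=> l /andP [Ll /eqP el]; move: Ll; rewrite -el mem_rem_uniqF.
(* (T - l) o eig_proj L l is the full annihilator of the eigenvalues in [L] *)
move=> l Ll; rewrite /eig_proj (linZ T_lin) scalerA mulrC -scalerA; congr (_ *: _).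
apply/eqP; rewrite -subr_eq0; apply/eqP.
rewrite [LHS](_ : _ = eig_annihilator (l :: rem l L) (\sum_(p <- s) p.2)) //.
rewrite lin_sum; last exact: eig_annihilator_linear.
rewrite big_seq big1 // => p ps; have [Lp Tp] := sL p ps.
rewrite (eig_annihilator_eigvec _ Tp) (big_rem p.1) /= ?subrr ?mul0r ?scale0r //.
by rewrite inE; case: eqVneq => //= ne; exact: rem_mem ne Lp.
Qed.
End EigenSums.

(* If [T1 + T2] acts semisimply and [T2] acts on [x] by a scalar, then so does
   [T2] on every eigencomponent of [x], which is therefore a [T1]-eigenvector. *)
Lemma eigen_sum_split (R : fieldType) (M : lmodType R) (T1 T2 : M -> M) mu x :
  linear T1 -> linear T2 -> (forall y, T1 (T2 y) = T2 (T1 y)) ->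
  T2 x = mu *: x -> eigen_sum (fun y => T1 y + T2 y) (fun _ => True) x ->
  eigen_sum T1 (fun _ => True) x.
Proof.
move=> T1_lin T2_lin T12 T2x [s [sT xs]].
pose T y := T1 y + T2 y.
have T_lin : linear T by move=> a y z; rewrite /T T1_lin T2_lin scalerDr addrACA.
have T2T y : T2 (T y) = T (T2 y) by rewrite /T linD // T12.
pose L := undup [seq p.1 | p <- s].
have xL : eigen_sum T (fun l => l \in L) x.
  by exists s; split=> // p ps; rewrite mem_undup map_f //; case: (sT p ps).
have [xP TP] := eigen_sum_proj T_lin (undup_uniq _) xL; rewrite {}xP.
apply: eigen_sum_sum => l /TP TPl; apply: (@eigen_sum_eigvec _ _ _ _ (l - mu)) => //.
have T2P : T2 (eig_proj T L l x) = mu *: eig_proj T L l x.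
  by rewrite (eig_proj_comm _ _ _ T2_lin T2T) T2x linZ //; apply: eig_proj_linear.
by move: TPl; rewrite /T T2P scalerBl => <-; rewrite addrK.
Qed.

Lemma subspace_eigen_sum (K : numClosedFieldType) (M : lmodType K) (T : M -> M)
    (P : K -> Prop) :
  linear T -> subspace (eigen_sum T P).
Proof.
move=> T_lin; split=> [|a x y Px Py]; first exact: eigen_sum0.
by apply: eigen_sumD => //; apply: eigen_sumZ.
Qed.

Lemma subspace_eigenspace (K : numClosedFieldType) (M : lmodType K) (S : M -> Prop)
    (T : M -> M) (h : K) :
  subspace S -> linear T -> subspace (fun x => S x /\ T x = h *: x).
Proof.
move=> [S0 SZD] T_lin; split=> [|a x y [Sx Tx] [Sy Ty]].
  by split=> //; rewrite lin0 // scaler0.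
by split; [exact: SZD | rewrite T_lin Tx Ty scalerDr !scalerA mulrC].
Qed.

Lemma seq_uniform_bound (T : eqType) (P : nat -> T -> Prop) (s : seq T) :
  (forall k k' x, (k <= k')%N -> P k x -> P k' x) ->
  (forall x, x \in s -> exists k, P k x) -> exists k, forall x, x \in s -> P k x.
Proof.
move=> P_mono; elim: s => [|x s IH] sP; first by exists 0%N.
have [k1 Px] := sP x (mem_head _ _).
have [k2 Ps] : exists k, forall y, y \in s -> P k y.
  by apply: IH => y sy; apply: sP; rewrite inE sy orbT.
exists (maxn k1 k2) => y; rewrite inE => /predU1P [->|sy].
  exact: P_mono (leq_maxl _ _) Px.
exact: P_mono (leq_maxr _ _) (Ps y sy).
Qed.

Lemma sum_ord_eq_from (M : nmodType) (A B : nat -> M) (T0 : nat) :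
  (forall i, (T0 <= i)%N -> A i = 0) -> (forall i, (T0 <= i)%N -> B i = 0) ->
  (exists N0, forall N, (N0 <= N)%N -> \sum_(i < N) A i = \sum_(i < N) B i) ->
  forall N, (T0 <= N)%N -> \sum_(i < N) A i = \sum_(i < N) B i.
Proof.
have stable (F : nat -> M) : (forall i, (T0 <= i)%N -> F i = 0) ->
    forall N, (T0 <= N)%N -> \sum_(i < N) F i = \sum_(i < T0) F i.
  move=> F0 N T0N; rewrite -!(big_mkord xpredT F) (big_cat_nat (leq0n T0) T0N) /=.
  rewrite [\sum_(T0 <= i < N) _]big1_seq ?addr0 // => i /andP [_].
  by rewrite mem_index_iota => /andP [/F0].
move=> A0 B0 [N0 AB] N T0N; have T0M : (T0 <= maxn N0 N)%N.
  exact: leq_trans T0N (leq_maxr _ _).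
by rewrite !stable // -(stable A A0 _ T0M) -(stable B B0 _ T0M) AB ?leq_maxl.
Qed.

Section GeneratedModules.
Variables (K : numClosedFieldType) (V M : lmodType K) (Y : V -> int -> M -> M).

Definition generated_by (gs : seq M) := forall S : M -> Prop,
  subspace S -> (forall u n w, S w -> S (Y u n w)) ->
  (forall w, w \in gs -> S w) -> forall w, S w.

Lemma generated_by_eigvecs (T : M -> M) (gs : seq M) :
  generated_by gs -> (forall g, g \in gs -> eigen_sum T (fun _ => True) g) ->
  exists tq : seq (K * M), (forall q, q \in tq -> T q.2 = q.1 *: q.2) /\
    generated_by [seq q.2 | q <- tq].
Proof.
move=> gen gsT.
suff [tq [tqT gs_tq]] : exists tq : seq (K * M),
    (forall q, q \in tq -> T q.2 = q.1 *: q.2) /\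
    forall g, g \in gs -> forall S, subspace S ->
      (forall q, q \in tq -> S q.2) -> S g.
  exists tq; split=> // S S_sub SY Stq; apply: gen => // g gs_g.
  by apply: gs_tq => // q tq_q; apply: Stq; rewrite map_f.
elim: gs gsT {gen} => [|g gs IH] gsT; first by exists [::].
have [g' gs_g'|tq [tqT gs_tq]] := IH; first by apply: gsT; rewrite inE gs_g' orbT.
have [sg [sgT ->]] := gsT g (mem_head _ _).
exists (sg ++ tq); split=> [q|g']; first by rewrite mem_cat => /orP [/sgT []|/tqT].
move=> gs_g' S S_sub Stq; move: gs_g'; rewrite inE => /predU1P [->|gs_g'].
  by apply: subspace_sum => // q sg_q; apply: Stq; rewrite mem_cat sg_q.
by apply: gs_tq => // q tq_q; apply: Stq; rewrite mem_cat tq_q orbT.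
Qed.
End GeneratedModules.

Section BorcherdsTerms.
Variables (K : numClosedFieldType) (V M : lmodType K) (YV : V -> int -> V -> V).
Variables (Y : V -> int -> M -> M) (u v : V) (w : M) (l m n : int).

Definition borcherds_lhs (i : nat) : M :=
  ((-1) ^+ i * binz K l i) *:
    (Y u (m + l - i%:Z) (Y v (n + i%:Z) w)
     - (-1) ^+ `|l|%N *: Y v (n + l - i%:Z) (Y u (m + i%:Z) w)).

Definition borcherds_rhs (i : nat) : M :=
  binz K m i *: Y (YV u (l + i%:Z) v) (m + n - i%:Z) w.

Lemma jacobi_atE : jacobi_at YV Y u v w l m n =
  exists N0 : nat, forall N : nat, (N0 <= N)%N ->
    \sum_(i < N) borcherds_lhs i = \sum_(i < N) borcherds_rhs i.
Proof. by []. Qed.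
End BorcherdsTerms.

Section HomSpace.
Variables (K : numClosedFieldType) (V1 V2 W W2 : lmodType K).
Variables (vac1 : V1) (Y1 : V1 -> int -> V1 -> V1).
Variables (YW1 : V1 -> int -> W -> W) (YW2 : V2 -> int -> W -> W).
Variable Y22 : V2 -> int -> W2 -> W2.
Hypothesis YW1_mod : weak_module vac1 Y1 YW1.
Hypothesis YW2_lin : forall v n, linear (YW2 v n).
Hypothesis YW_comm : forall u v m n w, YW1 u m (YW2 v n w) = YW2 v n (YW1 u m w).

Local Notation Hom := (HomV Y22 YW2).
Local Notation Yh := (Yhom (W2 := W2) YW1).

Let YW1_lin u n : linear (YW1 u n).
Proof. by case: YW1_mod => _ [_ [YW1_lin _]] a x y; apply: YW1_lin. Qed.

Let YW1_linv n w : linear (fun u => YW1 u n w).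
Proof. by case: YW1_mod => _ [_ [_ [YW1_linv _]]] a x y; apply: YW1_linv. Qed.

Lemma HomV_subspace : subspace Hom.
Proof.
split=> [|a f g [f_lin f_int] [g_lin g_int]].
  by split=> [a x y|v n w]; rewrite /= ?scaler0 ?addr0 // lin0.
split=> [b x y|v n w]; rewrite !fctE /=; first last.
  by rewrite f_int g_int YW2_lin.
by rewrite f_lin g_lin !scalerDr !scalerA mulrC addrACA.
Qed.

Lemma HomV_Yhom u n f : Hom f -> Hom (Yh u n f).
Proof.
case=> f_lin f_int; split=> [a x y|v m w]; rewrite /Yhom.
  by rewrite f_lin YW1_lin.
by rewrite f_int YW_comm.
Qed.

Lemma Yhom_linear u n : linear (Yh u n).
Proof. by move=> a f g; apply/funext => w; rewrite /Yhom /= YW1_lin. Qed.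

Lemma HomV_eigvec v n mu f w : Hom f -> Y22 v n w = mu *: w ->
  YW2 v n (f w) = mu *: f w.
Proof. by case=> f_lin f_int Yw; rewrite -f_int Yw linZ. Qed.

(* [f] pulls the submodule [P] back to a submodule of [W2]. *)
Lemma HomV_generated gs f (P : W -> Prop) : generated_by Y22 gs -> Hom f ->
  subspace P -> (forall v n x, P x -> P (YW2 v n x)) ->
  (forall w, w \in gs -> P (f w)) -> forall w, P (f w).
Proof.
move=> gen [f_lin f_int] [P0 PZD] PY; apply: gen.
  by split=> [|a x y Px Py]; rewrite ?lin0 ?f_lin //; apply: PZD.
by move=> v n w; rewrite f_int; apply: PY.
Qed.

Lemma HomV_eq0 gs f : generated_by Y22 gs -> Hom f ->
  (forall w, w \in gs -> f w = 0) -> f = 0.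
Proof.
move=> gen f_hom gs0; apply/funext => w.
apply: (HomV_generated (P := fun x => x = 0) gen f_hom) => //.
- by split=> // a x y -> ->; rewrite scaler0 addr0.
- by move=> v n x ->; rewrite lin0.
Qed.

Lemma Yhom_trunc gs u f : generated_by Y22 gs -> Hom f ->
  exists N : int, forall n, N <= n -> forall w, YW1 u n (f w) = 0.
Proof.
move=> gen f_hom; pose P (k : nat) x := forall n : int, k%:Z <= n -> YW1 u n x = 0.
have [k gsP] : exists k, forall w, w \in gs -> P k (f w).
  apply: seq_uniform_bound => [k k' x kk' Px n k'n|w _]; first by apply: Px; lia.
  case: YW1_mod => _ [_ [_ [_ [YW1_trunc _]]]]; have [N N0] := YW1_trunc u (f w) I.
  by exists `|N|%N => n Nn; apply: N0; lia.
exists k%:Z => n kn w; move: w n kn; apply: (HomV_generated (P := P k) gen f_hom).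
- by split=> [n _|a x y Px Py n kn]; rewrite ?lin0 ?YW1_lin ?Px ?Py ?scaler0 ?addr0.
- by move=> v m x Px n kn; rewrite YW_comm Px ?lin0.
- exact: gsP.
Qed.

Hypothesis Y1_trunc : forall u v, exists N : int, forall n, N <= n -> Y1 u n v = 0.

Lemma Yhom_jacobi gs u v f l m n : generated_by Y22 gs -> Hom f ->
  jacobi_at Y1 Yh u v f l m n.
Proof.
move=> gen f_hom.
have [Nu Nu0] := Yhom_trunc u gen f_hom.
have [Nv Nv0] := Yhom_trunc v gen f_hom.
have [Nuv Nuv0] := Y1_trunc u v.
case: YW1_mod => _ [_ [_ [_ [_ [_ YW1_jac]]]]].
rewrite jacobi_atE; exists (`|Nv - n| + `|Nu - m| + `|Nuv - l|)%N => N T0N.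
apply/funext => w; rewrite !fct_sumE.
apply: (sum_ord_eq_from (A := borcherds_lhs YW1 u v (f w) l m n)
          (B := borcherds_rhs Y1 YW1 u v (f w) l m n) _ _ _ T0N).
- move=> i T0i; rewrite /borcherds_lhs Nv0 ?Nu0; try lia.
  by rewrite !(lin0 (YW1_lin _ _)) !scaler0 subrr scaler0.
- move=> i T0i; rewrite /borcherds_rhs Nuv0; last by lia.
  by have /= -> := lin0 (YW1_linv (m + n - i%:Z) (f w)); rewrite scaler0.
- exact: YW1_jac.
Qed.

Lemma Yhom_weak_module gs : generated_by Y22 gs -> weak_module_on vac1 Y1 Hom Yh.
Proof.
move=> gen; split; first exact: HomV_subspace.
split; first by move=> u n f; apply: HomV_Yhom.
split; first by move=> u n a f g _ _; apply: Yhom_linear.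
split; first by move=> u u' n a f _; apply/funext => w; apply: YW1_linv.
split.
  move=> u f /(Yhom_trunc u gen) [N N0].
  by exists N => n Nn; apply/funext => w; apply: N0.
split; last by move=> u v f l m n /(Yhom_jacobi u v l m n gen).
case: YW1_mod => _ [_ [_ [_ [_ [YW1_vac _]]]]] n f _.
by apply/funext => w; rewrite /Yhom YW1_vac //; case: eqP.
Qed.

Section Grading.
Variables (om1 : V1) (om2 : V2).
Local Notation L1 := (YW1 om1 1).
Local Notation L2 := (YW2 om2 1).
Hypothesis L_graded : graded_on (fun _ => True) (fun w => L1 w + L2 w).
Variable tq : seq (K * W2).
Hypothesis tq_eigvec : forall q, q \in tq -> Y22 om2 1 q.2 = q.1 *: q.2.
Hypothesis tq_gen : generated_by Y22 [seq q.2 | q <- tq].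

Lemma HomV_weight g h mu w : Hom g -> Y22 om2 1 w = mu *: w ->
  Yh om1 1 g = h *: g -> L1 (g w) + L2 (g w) = (h + mu) *: g w.
Proof.
move=> g_hom Yw L1g; rewrite (HomV_eigvec g_hom Yw) scalerDl; congr (_ + _).
exact: (congr1 (fun F => F w) L1g).
Qed.

Lemma HomV_eq0_eigvecs g : Hom g -> (forall q, q \in tq -> g q.2 = 0) -> g = 0.
Proof. by move=> g_hom tq0; apply: (HomV_eq0 tq_gen) => // _ /mapP [q /tq0 ? ->]. Qed.

Lemma Yhom_semisimple : semisimple_on Hom (Yh om1 1).
Proof.
move=> f f_hom; case: L_graded => L_ss _ _.
have f_tq q : q \in tq -> eigen_sum L1 (fun _ => True) (f q.2).
  move=> tq_q; apply: (eigen_sum_split (T2 := L2) (mu := q.1)) (L_ss _ I) => //.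
  exact: HomV_eigvec f_hom (tq_eigvec tq_q).
have [Lam fLam] := eigen_sum_seq f_tq.
pose Lu := undup Lam.
have f_Lu w : eigen_sum L1 (fun mu => mu \in Lu) (f w).
  apply: (HomV_generated (P := eigen_sum L1 (fun mu => mu \in Lu)) tq_gen f_hom).
  - exact: subspace_eigen_sum.
  - by move=> v n x; apply: eigen_sum_map => // y; rewrite YW_comm.
  - by move=> _ /mapP [q tq_q ->]; apply: eigen_sumW (fLam q tq_q) => mu; rewrite mem_undup.
have f_proj w := eigen_sum_proj (YW1_lin om1 1) (undup_uniq Lam) (f_Lu w).
exists [seq (l, fun w => eig_proj L1 Lu l (f w)) | l <- Lu]; split; last first.
  by apply/funext => w; rewrite big_map fct_sumE; exact: (f_proj w).1.
move=> _ /mapP [l Lu_l ->] /=; split.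
  case: f_hom => f_lin f_int; split=> [a x y|v n w].
    by rewrite f_lin eig_proj_linear.
  by rewrite f_int (eig_proj_comm _ _ _ (YW2_lin _ _)) // => y; rewrite YW_comm.
by apply/funext => w; apply: (f_proj w).2.
Qed.

Lemma Yhom_weight_fin_dim h : fin_dim (fun g => Hom g /\ Yh om1 1 g = h *: g).
Proof.
case: L_graded => _ L_fin_dim _.
apply: (fin_dim_joint_injective (phi := fun (q : K * W2) (g : W2 -> W) => g q.2)
  (I := tq)) => [||q tq_q|g [g_hom _]].
- exact: subspace_eigenspace HomV_subspace (Yhom_linear _ _).
- by [].
- have [t Wt] := L_fin_dim (h + q.1); exists t => g [g_hom L1g]; apply: Wt.
  by split=> //; apply: HomV_weight g_hom (tq_eigvec tq_q) L1g.
- exact: HomV_eq0_eigvecs.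
Qed.

Lemma Yhom_weight_trunc h : exists N : int, forall n : int, n <= N ->
  forall g, Hom g -> Yh om1 1 g = (h + n%:~R) *: g -> g = 0.
Proof.
case: L_graded => _ _ L_trunc.
pose P (k : nat) (q : K * W2) := forall n : int, n <= - k%:Z -> forall x,
  L1 x + L2 x = (h + q.1 + n%:~R) *: x -> x = 0.
have [k tqP] : exists k, forall q, q \in tq -> P k q.
  apply: seq_uniform_bound => [k k' q kk' Pq n k'n|q _]; first by apply: Pq; lia.
  have [N N0] := L_trunc (h + q.1).
  by exists `|N|%N => n Nn x; apply: N0 => //; lia.
exists (- k%:Z) => n kn g g_hom L1g; apply: HomV_eq0_eigvecs => // q tq_q.
apply: (tqP q tq_q n kn).
by rewrite (HomV_weight g_hom (tq_eigvec tq_q) L1g) addrAC.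
Qed.

Lemma Yhom_graded : graded_on Hom (Yh om1 1).
Proof.
split; [exact: Yhom_semisimple | exact: Yhom_weight_fin_dim |].
exact: Yhom_weight_trunc.
Qed.
End Grading.
End HomSpace.

Theorem proposition4p8 (K : numClosedFieldType)
    (V1 : lmodType K) (vac1 om1 : V1) (Y1 : V1 -> int -> V1 -> V1) (c1 : K)
    (V2 : lmodType K) (vac2 om2 : V2) (Y2 : V2 -> int -> V2 -> V2) (c2 : K)
    (hV1 : is_VOA vac1 om1 Y1 c1) (hV2 : is_VOA vac2 om2 Y2 c2)
    (W : lmodType K) (YW1 : V1 -> int -> W -> W) (YW2 : V2 -> int -> W -> W)
    (hW : weak_tensor_module vac1 vac2 Y1 Y2 YW1 YW2)
    (W2 : lmodType K) (Y22 : V2 -> int -> W2 -> W2)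
    (hW2 : weak_module vac2 Y2 Y22) (hfg : fin_generated Y22) :
  weak_module_on vac1 Y1 (HomV Y22 YW2) (Yhom (W2:=W2) YW1) /\
  (module_on vac2 om2 Y2 (fun _ => True) Y22 ->
   graded_on (fun _ => True) (fun w => YW1 om1 1 w + YW2 om2 1 w) ->
   (semisimple_on (fun _ => True) (YW1 om1 1) \/
    semisimple_on (fun _ => True) (YW2 om2 1)) ->
   module_on vac1 om1 Y1 (HomV Y22 YW2) (Yhom (W2:=W2) YW1)).
Proof.
case: hW => YW1_mod [_ [_ [YW2_lin _]]] YW_comm.
have {}YW2_lin v n : linear (YW2 v n) by move=> a x y; apply: YW2_lin.
have Y1_trunc u v : exists N : int, forall n, N <= n -> Y1 u n v = 0.
  by case: hV1 => [[_ [_ [_ [_ [Y1_trunc _]]]]] _]; apply: Y1_trunc.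
case: hfg => gs gen.
have Hom_mod := Yhom_weak_module YW1_mod YW2_lin YW_comm Y1_trunc gen.
split=> // [[_ [W2_ss _ _]] L_graded _]; split=> //.
have [tq [tq_eigvec tq_gen]] := generated_by_eigvecs gen (fun g _ => W2_ss g I).
exact: (Yhom_graded YW1_mod YW2_lin YW_comm L_graded tq_eigvec tq_gen).
Qed.
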